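(* Let $k$ be any field and $d$ a positive integer. Then $$S_{d+1}(x_1,\ldots,x_{d+1})\equiv S_d(x_1,\ldots,x_d)\,x_{d+1}\equiv x_{d+1}\,S_d(x_1,\ldots,x_d)\pmod{R_1^{(d)}},$$ i.e. the pairwise differences of these three elements lie in $R_1^{(d)}$.
   Context: $X=\{x_1,x_2,\ldots\}$ is a countably infinite set and $k_0\langle X\rangle$ is the free associative $k$-algebra (without identity) on $X$. A $T$-space is a $k$-linear subspace closed under every algebra endomorphism of $k_0\langle X\rangle$; the $T$-space generated by a subset is the smallest $T$-space containing it. $S_d(v_1,\ldots,v_d)=\sum_{\sigma\in\Sigma_d}\prod_{i=1}^d v_{\sigma(i)}$, and $R_1^{(d)}$ is the $T$-space generated by $S_d(x_1,\ldots,x_d)$. *)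

From HB Require Import structures.
From mathcomp Require Import all_boot all_order all_algebra all_fingroup.
From mathcomp Require Import finmap.
From mathcomp Require Import monalg.

Set Implicit Arguments.
Unset Strict Implicit.
Unset Printing Implicit Defensive.

Import GRing.Theory.
Local Open Scope ring_scope.

(* k<X>: the free unital associative k-algebra on X = {x_0, x_1, ...},
   realized as finitely supported k-linear combinations of words
   (free monoid fmonom nat) with concatenation product. *)
Notation ncpoly k := {malg k[fmonom nat]}.

(* the variable x_i (0-based indexing) *)
Definition xvar (k : fieldType) (i : nat) : ncpoly k := << fmu i >>.

(* k_0<X>: the elements with zero constant term (no empty word) *)
Definition nonunital (k : fieldType) (p : ncpoly k) : Prop := mcoeff (@fmone nat) p = 0.

(* algebra endomorphism of k_0<X> (only its values on k_0<X> matter) *)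
Definition is_endo (k : fieldType) (phi : ncpoly k -> ncpoly k) : Prop :=
  (forall p, nonunital p -> nonunital (phi p)) /\
  (forall p q, nonunital p -> nonunital q -> phi (p + q) = phi p + phi q) /\
  (forall (c : k) p, nonunital p -> phi (c *: p) = c *: phi p) /\
  (forall p q, nonunital p -> nonunital q -> phi (p * q) = phi p * phi q).

Definition is_Tspace (k : fieldType) (V : ncpoly k -> Prop) : Prop :=
  (forall p, V p -> nonunital p) /\
  V 0 /\
  (forall p q, V p -> V q -> V (p + q)) /\
  (forall (c : k) p, V p -> V (c *: p)) /\
  (forall phi, is_endo phi -> forall p, V p -> V (phi p)).

Definition in_Tspace_gen (k : fieldType) (G : ncpoly k -> Prop) (f : ncpoly k)
  : Prop :=
  forall V, is_Tspace V -> (forall g, G g -> V g) -> V f.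

(* S_d(v_1,...,v_d) = sum over sigma in Sigma_d of v_{sigma(1)} ... v_{sigma(d)},
   with the v's given as a 0-indexed family v 0, ..., v (d-1) *)
Definition Ssym (k : fieldType) (d : nat) (v : nat -> ncpoly k) : ncpoly k :=
  \sum_(s : 'S_d) \prod_(i < d) v (s i : nat).

Definition R1 (k : fieldType) (d : nat) : ncpoly k -> Prop :=
  in_Tspace_gen (fun g => g = Ssym d (@xvar k)).

From HB Require Import structures.
From mathcomp Require Import all_boot all_order all_algebra all_fingroup.
From mathcomp Require Import finmap.
From mathcomp Require Import monalg.
Import GRing.Theory.
Local Open Scope ring_scope.
Set Implicit Arguments.
Unset Strict Implicit.

(* Every word of S_{d+1}(x_0, ..., x_d) arises by inserting the letter x_d into a
   word of S_d. Inserting it at the end gives S_d x_d; inserting it just before the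
   letter x_c gives the words of S_d(x_0, ..., x_d x_c, ..., x_{d-1}). Hence
   S_{d+1} - S_d x_d is a sum of instances of S_d under substitutions of variables
   by elements of k_0<X>, which are endomorphisms, so it lies in R_1^(d). Reading
   words backwards (in the converse ring) handles S_{d+1} - x_d S_d, and the third
   difference is the difference of the first two. *)

Definition symsum (R : pzRingType) n (f : nat -> R) : R :=
  \sum_(s : 'S_n) \prod_(i < n) f (s i).

Section InsertLargestLetter.
Variable R : pzRingType.

Lemma sum_lift_perm n (F : 'S_n.+1 -> R) (i j : 'I_n.+1) :
  \sum_(s : 'S_n.+1 | s i == j) F s = \sum_(t : 'S_n) F (lift_perm i j t).
Proof.
rewrite (reindex (lift_perm i j)); last first.
  pose unlift_fun i' (s : 'S_n.+1) k := odflt k (unlift (s i') (s (lift i' k))).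
  have unlift_funK i' (s : 'S_n.+1) k :
      lift (s i') (unlift_fun i' s k) = s (lift i' k).
    rewrite /unlift_fun; have := neq_lift i' k.
    by rewrite -(can_eq (permK s)) => /unlift_some[] ? ? ->.
  have unlift_fun_inj : injective (unlift_fun i _).
    move=> s; apply: can_inj (unlift_fun (s i) s^-1%g) _ => k'.
    by rewrite {1}/unlift_fun unlift_funK !permK liftK.
  exists (fun s => perm (unlift_fun_inj s)) => [s _ | s].
    by apply/permP=> k'; rewrite permE /unlift_fun lift_perm_lift lift_perm_id liftK.
  move/(s _ =P _) => si; apply/permP=> k.
  case: (unliftP i k) => [k'|] ->; rewrite ?lift_perm_id //.
  by rewrite lift_perm_lift -si permE unlift_funK.
by apply: eq_bigl => t; rewrite lift_perm_id eqxx.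
Qed.

Lemma sum_perm_lift n (F : 'S_n.+1 -> R) (j : 'I_n.+1) :
  \sum_(s : 'S_n.+1) F s = \sum_(i < n.+1) \sum_(t : 'S_n) F (lift_perm i j t).
Proof.
rewrite (partition_big (fun s : 'S_n.+1 => (s^-1)%g j) predT) //=.
apply: eq_bigr => i _; rewrite -sum_lift_perm; apply: eq_bigl => s.
by apply/eqP/eqP => [<-|<-]; rewrite ?permKV ?permK.
Qed.

Lemma prodr_nat_merge (G : nat -> R) n j : (j < n)%N ->
  \prod_(0 <= k < n.+1) G k =
  \prod_(0 <= k < n) (if k == j then G k * G k.+1 else G (bump j k)).
Proof.
move=> ltjn; have lejn := ltnW ltjn.
rewrite (@big_cat_nat _ _ _ j) ?(leqW lejn) //= [RHS](@big_cat_nat _ _ _ j) //=.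
rewrite (big_ltn (leqW ltjn)) big_add1 !(big_ltn ltjn) eqxx /= !mulrA.
congr (_ * _ * _ * _).
- by apply: eq_big_nat => k /andP[_ ltkj]; rewrite ltn_eqF // /bump leqNgt ltkj.
- by apply: eq_big_nat => k /andP[ltjk _]; rewrite gtn_eqF // /bump ltnW.
Qed.

Lemma prod_ord_merge n (g : 'I_n.+1 -> R) (j : 'I_n) :
  let i := widen_ord (leqnSn n) j in
  \prod_(k < n.+1) g k =
  \prod_(k < n) (if k == j then g i * g (lift i k) else g (lift i k)).
Proof.
move=> i; pose G k := g (inord k).
have gE (k : 'I_n.+1) : g k = G k by rewrite /G inord_val.
rewrite (eq_bigr _ (fun k _ => gE k)) -(big_mkord xpredT G).
rewrite (prodr_nat_merge _ (ltn_ord j)) big_mkord.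
apply: eq_bigr => k _; rewrite !gE /=.
have [->|neq] := eqVneq k j; first by rewrite !eqxx /bump leqnn.
by rewrite val_eqE (negbTE neq).
Qed.

Lemma prod_lift_perm_max n (f : nat -> R) (t : 'S_n) :
  \prod_(k < n.+1) f (lift_perm ord_max ord_max t k) = \prod_(k < n) f (t k) * f n.
Proof.
rewrite big_ord_recr lift_perm_id /=; congr (_ * _); apply: eq_bigr => k _.
have -> : widen_ord (leqnSn n) k = lift ord_max k by exact/val_inj/esym/lift_max.
by rewrite lift_perm_lift lift_max.
Qed.

Lemma prod_lift_perm_widen n (f : nat -> R) (j : 'I_n) (t : 'S_n) :
  \prod_(k < n.+1) f (lift_perm (widen_ord (leqnSn n) j) ord_max t k) =
  \prod_(k < n) (if k == j then f n * f (t k) else f (t k)).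
Proof.
rewrite (prod_ord_merge _ j); apply: eq_bigr => k _.
by rewrite lift_perm_id lift_perm_lift lift_max.
Qed.

Lemma symsumSr n (f : nat -> R) :
  symsum n.+1 f = symsum n f * f n +
    \sum_(c < n) symsum n (fun l => if l == c then f n * f l else f l).
Proof.
rewrite /symsum (sum_perm_lift _ ord_max) big_ord_recr [RHS]addrC /= mulr_suml.
congr (_ + _); last by apply: eq_bigr => t _; rewrite prod_lift_perm_max.
rewrite exchange_big [RHS]exchange_big /=; apply: eq_bigr => t _.
rewrite [RHS](reindex_inj (@perm_inj _ t)) /=; apply: eq_bigr => j _.
rewrite prod_lift_perm_widen; apply: eq_bigr => k _.
by rewrite val_eqE (inj_eq (@perm_inj _ t)).
Qed.

End InsertLargestLetter.

Section Converse.
Variable R : pzRingType.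

Lemma prodr_converse n (F : 'I_n -> R) :
  \prod_(i < n) (F i : R^c) = \prod_(i < n) F (rev_ord i).
Proof.
elim: n F => [|n IH] F; first by rewrite !big_ord0.
rewrite big_ord_recl IH big_ord_recr /=; congr (_ * F _).
  apply: eq_bigr => i _; congr F; apply: val_inj.
  by rewrite /= /bump add1n -subSn.
by apply: val_inj; rewrite /= subnn.
Qed.

Lemma symsum_converse n (f : nat -> R) : @symsum R^c n f = symsum n f.
Proof.
rewrite /symsum; under eq_bigr do rewrite prodr_converse.
rewrite [RHS](reindex_inj (mulgI (perm (@rev_ord_inj n)))).
by apply: eq_bigr => s _; apply: eq_bigr => i _; rewrite permM permE.
Qed.

(* In R^c products are read backwards, so right insertion becomes left insertion. *)
Lemma symsumSl n (f : nat -> R) :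
  symsum n.+1 f = f n * symsum n f +
    \sum_(c < n) symsum n (fun l => if l == c then f l * f n else f l).
Proof.
have := @symsumSr R^c n f; rewrite !symsum_converse => ->.
by congr (_ + _); apply: eq_bigr => c _; rewrite symsum_converse.
Qed.

End Converse.

Section TspaceGenerated.
Variables (k : fieldType) (G : ncpoly k -> Prop).
Implicit Types p q : ncpoly k.

Lemma Tspace_gen0 : in_Tspace_gen G 0.
Proof. by move=> V [_ [V0 _]]. Qed.

Lemma Tspace_genD p q :
  in_Tspace_gen G p -> in_Tspace_gen G q -> in_Tspace_gen G (p + q).
Proof.
move=> Gp Gq V TV GV; case: (TV) => _ [_ [VD _]].
by apply: VD; [apply: Gp | apply: Gq].
Qed.

Lemma Tspace_genZ (c : k) p : in_Tspace_gen G p -> in_Tspace_gen G (c *: p).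
Proof. by move=> Gp V TV GV; case: (TV) => _ [_ [_ [VZ _]]]; apply: VZ; apply: Gp. Qed.

Lemma Tspace_genB p q :
  in_Tspace_gen G p -> in_Tspace_gen G q -> in_Tspace_gen G (p - q).
Proof.
by move=> Gp Gq; rewrite -scaleN1r; apply: Tspace_genD => //; apply: Tspace_genZ.
Qed.

Lemma Tspace_gen_sum (I : Type) (r : seq I) (F : I -> ncpoly k) :
  (forall i, in_Tspace_gen G (F i)) -> in_Tspace_gen G (\sum_(i <- r) F i).
Proof.
move=> GF; elim: r => [|i r IH]; first by rewrite big_nil; apply: Tspace_gen0.
by rewrite big_cons; apply: Tspace_genD.
Qed.

Lemma Tspace_gen_endo (phi : ncpoly k -> ncpoly k) g :
  is_endo phi -> G g -> in_Tspace_gen G (phi g).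
Proof. by move=> endo Gg V [_ [_ [_ [_ Vphi]]]] GV; apply: Vphi => //; apply: GV. Qed.

End TspaceGenerated.

Section Substitution.
Variable k : fieldType.
Implicit Types (v : nat -> ncpoly k) (p q : ncpoly k).

Lemma nonunitalM p q : nonunital p -> nonunital (p * q).
Proof. by rewrite /nonunital rmorphM /= => ->; rewrite mul0r. Qed.

Lemma xvar_nonunital i : nonunital (xvar k i).
Proof. by rewrite /nonunital /xvar mcoeffU1 fm1_eq1. Qed.

Definition word_eval v (m : fmonom nat) : ncpoly k := \prod_(i <- (m : seq nat)) v i.

Lemma word_eval_mmorphism v : mmorphism (word_eval v).
Proof. by split=> [m1 m2|]; rewrite /word_eval ?fmM ?big_cat // fm1 big_nil. Qed.

HB.instance Definition _ v :=
  isMultiplicative.Build (fmonom nat) (ncpoly k) (word_eval v)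
    (word_eval_mmorphism v).

Lemma mcoeff1_word_eval v m : (forall i, nonunital (v i)) ->
  mcoeff (@fmone nat) (word_eval v m) = (m == @fmone nat)%:R.
Proof.
move=> v0; rewrite /word_eval; case: m => -[|i s] /=.
  by rewrite big_nil rmorph1 fmoneE eqxx.
rewrite big_cons rmorphM /= v0 mul0r.
by case: eqP => // /(congr1 (@fmonom_val nat)); rewrite fm1.
Qed.

Definition subst v p : ncpoly k := mmap (@malgC _ k) (word_eval v) p.

Lemma malgC_comm (c : k) p : c%:MP * p = p * c%:MP.
Proof.
rewrite [p]monalgE big_distrl big_distrr /=; apply: eq_bigr => m _.
by rewrite !malgM_def !fgmulUU mulrC mul1m mulm1.
Qed.

Lemma substD v : {morph subst v : p q / p + q}.
Proof. exact: mmapD. Qed.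

Lemma subst0 v : subst v 0 = 0.
Proof. exact: mmap0. Qed.

Lemma subst_multiplicative v : multiplicative (subst v).
Proof.
by apply: commr_mmap_is_multiplicative => c m m'; rewrite /GRing.comm malgC_comm.
Qed.

Lemma substM v : {morph subst v : p q / p * q}.
Proof. by case: (subst_multiplicative v). Qed.

Lemma subst1 v : subst v 1 = 1.
Proof. by case: (subst_multiplicative v). Qed.

Lemma substZ v (c : k) p : subst v (c *: p) = c *: subst v p.
Proof. by rewrite /subst mmapZ /= mul_malgC. Qed.

Lemma subst_xvar v i : subst v (xvar k i) = v i.
Proof. by rewrite /subst /xvar mmapU /= mpolyC1E mul1r /word_eval fmU big_seq1. Qed.

Lemma mcoeff1_subst v p : (forall i, nonunital (v i)) ->
  mcoeff (@fmone nat) (subst v p) = mcoeff (@fmone nat) p.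
Proof.
move=> v0; rewrite /subst mmapE raddf_sum [in RHS](monalgE p) raddf_sum /=.
apply: eq_bigr => m _; rewrite mul_malgC mcoeffZ mcoeff1_word_eval // mcoeffU.
by rewrite mulr_natr eq_sym.
Qed.

Lemma subst_endo v : (forall i, nonunital (v i)) -> is_endo (subst v).
Proof.
move=> v0; split; first by move=> p; rewrite /nonunital mcoeff1_subst.
split; first by move=> p q _ _; rewrite substD.
by split=> [c p _|p q _ _]; rewrite ?substZ ?substM.
Qed.

Lemma subst_symsum v n (w : nat -> ncpoly k) :
  subst v (symsum n w) = symsum n (subst v \o w).
Proof.
rewrite /symsum (big_morph _ (substD v) (subst0 v)); apply: eq_bigr => s _.
exact: (big_morph _ (substM v) (subst1 v)).
Qed.

End Substitution.

Section InsertionRecurrences.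
Variable k : fieldType.
Local Notation x := (@xvar k).

Lemma R1_Ssym d (v : nat -> ncpoly k) : (forall i, nonunital (v i)) -> R1 d (Ssym d v).
Proof.
move=> v0; have -> : Ssym d v = subst v (Ssym d x).
  rewrite [RHS]subst_symsum; apply: eq_bigr => s _; apply: eq_bigr => i _.
  by rewrite /= subst_xvar.
exact: Tspace_gen_endo (subst_endo v0) erefl.
Qed.

Lemma R1_sum_symsum d (v : 'I_d -> nat -> ncpoly k) :
  (forall c i, nonunital (v c i)) -> R1 d (\sum_(c < d) symsum d (v c)).
Proof. by move=> v0; apply: Tspace_gen_sum => c; apply: R1_Ssym. Qed.

Lemma R1_SsymSr d : R1 d (Ssym d.+1 x - Ssym d x * x d).
Proof.
have -> : Ssym d.+1 x = _ := symsumSr d x; rewrite addrAC subrr add0r.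
apply: R1_sum_symsum => c i; case: ifP => _; last exact: xvar_nonunital.
exact/nonunitalM/xvar_nonunital.
Qed.

Lemma R1_SsymSl d : R1 d (Ssym d.+1 x - x d * Ssym d x).
Proof.
have -> : Ssym d.+1 x = _ := symsumSl d x; rewrite addrAC subrr add0r.
apply: R1_sum_symsum => c i; case: ifP => _; last exact: xvar_nonunital.
exact/nonunitalM/xvar_nonunital.
Qed.

End InsertionRecurrences.

Theorem corollary2p2 (k : fieldType) (d : nat) (hd : (0 < d)%N) :
  let Sd1 := Ssym d.+1 (@xvar k) in
  let Sdx := Ssym d (@xvar k) * xvar k d in
  let xSd := xvar k d * Ssym d (@xvar k) in
  @R1 k d (Sd1 - Sdx) /\ @R1 k d (Sdx - xSd) /\ @R1 k d (Sd1 - xSd).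
Proof.
move=> Sd1 Sdx xSd.
have R1r : R1 d (Sd1 - Sdx) := @R1_SsymSr k d.
have R1l : R1 d (Sd1 - xSd) := @R1_SsymSl k d.
split; first exact: R1r.
split; last exact: R1l.
have -> : Sdx - xSd = (Sd1 - xSd) - (Sd1 - Sdx) by rewrite [RHS]addrC opprB addrA subrK.
exact: Tspace_genB R1l R1r.
Qed.
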